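(* If $|\Sigma|\ge3$, then the set $\mathtt{REV}$ of injective cellular automata is not closed in $(\mathtt{CA},\delta)$; that is, there is a sequence of injective CA converging in $\delta$ to a non-injective CA.
   Context: $\Sigma$ is a finite alphabet, $N(r)=[-r,r]$. A cellular automaton (CA) is a map $c:\Sigma^\mathbb{Z}\to\Sigma^\mathbb{Z}$ of the form $c(x)_i=F(x_{[i-r,i+r]})$ for a local function $F:\Sigma^{N(r)}\to\Sigma$. $\mathtt{CA}$ is the set of all CA, $\mathtt{REV}$ the injective ones. For $c,d\in\mathtt{CA}$ with common radius $r$, $D^c_d$ is the set of $w\in\Sigma^{N(r)}$ on which the local rules of $c$ and $d$ give different outputs, and $\delta(c,d)=|D^c_d|/|\Sigma|^{2r+1}$ (independent of $r$). *)

From HB Require Import structures.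
From mathcomp Require Import all_boot all_order all_algebra.
Set Implicit Arguments. Unset Strict Implicit. Unset Printing Implicit Defensive.
Import Order.TTheory GRing.Theory Num.Theory.

Definition config (S : finType) := int -> S.

(* Windows of radius r: functions N(r) = [-r, r] -> S, with position
   k : 'I_(2r+1) standing for offset k - r. *)
Definition window (S : finType) (r : nat) := {ffun 'I_(r.*2.+1) -> S}.

Record CA (S : finType) := MkCA {
  rad : nat;
  rule : window S rad -> S }.
Arguments rad {S} c.
Arguments rule {S} c w.

Definition glob (S : finType) (c : CA S) (x : config S) : config S :=
  fun i => rule c [ffun k : 'I_((rad c).*2.+1) => x (i + (k%:Z - (rad c)%:Z))%R].

(* Local function of c viewed at a radius R >= rad c (it ignores the outer
   cells of the window). *)
Definition lfun_at (S : finType) (c : CA S) {R : nat} (w : window S R) : S :=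
  rule c [ffun k : 'I_((rad c).*2.+1) => w (inord (k + (R - rad c)))].

Definition Dset (S : finType) (c d : CA S) : {set window S (maxn (rad c) (rad d))} :=
  [set w | lfun_at c w != lfun_at d w].

Definition delta (S : finType) (c d : CA S) : rat :=
  ((#|Dset c d|)%:R / (#|S| ^ (maxn (rad c) (rad d)).*2.+1)%:R)%R.

From HB Require Import structures.
From mathcomp Require Import all_boot all_order all_algebra perm zify.
From Stdlib Require Import FunctionalExtensionality.
Import Order.TTheory GRing.Theory Num.Theory.

(* Fix two distinct symbols a, b and write (a b) for their transposition.
   The radius-1 automaton [limitCA a b] applies (a b) to cell i whenever
   cell i+1 holds b.  It is not injective: the constant configurations a
   and b both have image the constant configuration a.
   The radius-(n+1) automaton [approxCA a b n] applies (a b) to cell i only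
   when cell i+1 holds b AND one of the cells i+1, ..., i+n+1 lies outside
   {a, b}.  It preserves membership in {a, b} and fixes the cells outside
   {a, b}, and it is injective: cell i is recovered by induction on the
   distance from i to the nearest cell outside {a, b} on its right.
   The two local rules only disagree on windows whose n+1 rightmost cells
   lie in {a, b}; there are |S|^(n+2) 2^(n+1) of them among |S|^(2n+3)
   windows, so when |S| >= 3 the distance is at most (2/3)^(n+1) <= 2/(n+1),
   which tends to 0. *)

Set Implicit Arguments.
Unset Strict Implicit.
Unset Printing Implicit Defensive.

Section Transposition.
Variables (S : finType) (a b : S).

Lemma pred2_tperm (s : S) : pred2 a b (tperm a b s) = pred2 a b s.
Proof.
by case: tpermP => [->|->|_ _]; rewrite /= ?eqxx ?orbT.
Qed.

Lemma tperm_out (s : S) : ~~ pred2 a b s -> tperm a b s = s.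
Proof.
by rewrite /= negb_or => /andP[sa sb]; rewrite tpermD // eq_sym.
Qed.

End Transposition.

Lemma window_cell (S : finType) (r m : nat) (x : config S) (i : int) :
  m < r.*2.+1 ->
  [ffun k : 'I_(r.*2.+1) => x (i + (k%:Z - r%:Z))%R] (inord m)
  = x (i + (m%:Z - r%:Z))%R.
Proof. by move=> hm; rewrite ffunE inordK. Qed.

Lemma window_index (r m : nat) : m <= r + r -> m < r.*2.+1.
Proof. by rewrite ltnS -addnn. Qed.

Section Automata.
Variables (S : finType) (a b : S).

Definition limit_rule (w : window S 1) : S :=
  if w (inord 2) == b then tperm a b (w (inord 1)) else w (inord 1).
Definition limitCA : CA S := MkCA limit_rule.

Definition approx_rule (n : nat) (w : window S n.+1) : S :=
  if (w (inord n.+2) == b)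
       && [exists j : 'I_n.+1, ~~ pred2 a b (w (inord (n.+2 + j)))]
  then tperm a b (w (inord n.+1)) else w (inord n.+1).
Definition approxCA (n : nat) : CA S := MkCA (@approx_rule n).

Definition sees_out (n : nat) (x : config S) (i : int) : bool :=
  [exists j : 'I_n.+1, ~~ pred2 a b (x (i + j.+1%:Z)%R)].

Lemma glob_limitCA (x : config S) (i : int) :
  glob limitCA x i = if x (i + 1)%R == b then tperm a b (x i) else x i.
Proof.
rewrite /glob /= /limit_rule !window_cell //.
by have -> : (i + (1%:Z - 1%:Z))%R = i by lia.
Qed.

Lemma glob_approxCA (n : nat) (x : config S) (i : int) :
  glob (approxCA n) x i =
  if (x (i + 1)%R == b) && sees_out n x i then tperm a b (x i) else x i.
Proof.
rewrite /glob /= /approx_rule !window_cell -?addnn; try lia.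
have -> : (i + ((n.+2)%:Z - (n.+1)%:Z))%R = (i + 1)%R by lia.
have -> : (i + ((n.+1)%:Z - (n.+1)%:Z))%R = i by lia.
congr (if _ && _ then _ else _); apply: eq_existsb => j.
rewrite ffunE inordK; last by have := ltn_ord j; lia.
by congr (~~ pred2 a b (x _)); lia.
Qed.

Hypothesis ab : a != b.

Lemma limitCA_not_injective : ~ injective (glob limitCA).
Proof.
move=> inj.
have same_image : glob limitCA (fun _ => a) = glob limitCA (fun _ => b).
  by apply: functional_extensionality => i; rewrite !glob_limitCA (negbTE ab) eqxx tpermR.
by have /eqP := congr1 (fun x : config S => x 0%R) (inj _ _ same_image); rewrite (negbTE ab).
Qed.

End Automata.

Section ApproxInjective.
Variables (S : finType) (a b : S) (n : nat).
Notation F := (glob (approxCA a b n)).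

Lemma pred2_approx (x : config S) (i : int) :
  pred2 a b (F x i) = pred2 a b (x i).
Proof. by rewrite glob_approxCA; case: ifP; rewrite ?pred2_tperm. Qed.

Lemma approx_out (x : config S) (i : int) :
  ~~ pred2 a b (x i) -> F x i = x i.
Proof. by move=> xi; rewrite glob_approxCA tperm_out //; case: ifP. Qed.

Variables x y : config S.
Hypothesis Fxy : F x =1 F y.

Lemma same_pred2 (i : int) : pred2 a b (x i) = pred2 a b (y i).
Proof. by rewrite -pred2_approx Fxy pred2_approx. Qed.

Lemma agree_out (i : int) : ~~ pred2 a b (x i) -> x i = y i.
Proof.
move=> xi; have yi : ~~ pred2 a b (y i) by rewrite -same_pred2.
by rewrite -approx_out // Fxy approx_out.
Qed.

(* A cell whose (k+1)-th right neighbour, k <= n, lies outside {a, b} is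
   recovered: by induction on k its right neighbour is, and then both
   configurations undergo the same bijection (a b) at that cell. *)
Lemma agree_near (k : nat) : k <= n -> forall i : int,
  ~~ pred2 a b (x (i + k.+1%:Z)%R) -> x i = y i.
Proof.
elim: k => [|k IH] kn i out.
  have e1 : x (i + 1)%R = y (i + 1)%R by exact: agree_out.
  have nb : x (i + 1)%R != b by move: out; rewrite negb_or => /andP[].
  by have := Fxy i; rewrite !glob_approxCA -e1 (negbTE nb).
have e1 : x (i + 1)%R = y (i + 1)%R.
  by apply: (IH (ltnW kn)); have -> : (i + 1 + k.+1%:Z = i + k.+2%:Z)%R by lia.
have sx : sees_out a b n x i by apply/existsP; exists (Ordinal (kn : k.+1 < n.+1)).
have sy : sees_out a b n y i.
  by apply/existsP; exists (Ordinal (kn : k.+1 < n.+1)); rewrite -same_pred2.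
have := Fxy i; rewrite !glob_approxCA sx sy -e1 !andbT.
by case: ifP => // _; apply: perm_inj.
Qed.

(* If no inspected cell lies outside {a, b}, the cell is left untouched;
   otherwise [agree_near] applies. *)
Lemma agree_everywhere : x = y.
Proof.
apply: functional_extensionality => i.
case: (boolP (sees_out a b n x i)) => [/existsP[j out]|nx].
  by apply: (agree_near (k := j)) out; rewrite -ltnS.
have ny : ~~ sees_out a b n y i.
  by apply: contra nx => /existsP[j out]; apply/existsP; exists j; rewrite same_pred2.
by have := Fxy i; rewrite !glob_approxCA (negbTE nx) (negbTE ny) !andbF.
Qed.

End ApproxInjective.

Lemma approxCA_injective (S : finType) (a b : S) (n : nat) :
  injective (glob (approxCA a b n)).
Proof. by move=> x y Fxy; apply: (@agree_everywhere S a b n) => i; rewrite Fxy. Qed.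

Section Counting.
Variables (S : finType) (a b : S) (n : nat).

Definition ab_tail : {set window S n.+1} :=
  [set w : window S n.+1 | [forall k : 'I_(n.+1.*2.+1), (n.+2 <= k) ==> pred2 a b (w k)]].

(* Outside [ab_tail] the approximant sees a cell outside {a, b}, so it acts
   exactly as the limit. *)
Lemma Dset_approx_limit : Dset (approxCA a b n) (limitCA a b) \subset ab_tail.
Proof.
apply/subsetP => w; rewrite !inE /lfun_at /= /approx_rule /limit_rule.
have -> : maxn n.+1 1 - n.+1 = 0 by lia.
have -> : maxn n.+1 1 - 1 = n by lia.
rewrite !ffunE !inordK ?addn0 ?add1n -?addnn; try lia.
case: (w (inord n.+2) == b); last by rewrite eqxx.
case: existsP => [_|no_out _]; first by rewrite eqxx.
apply/forallP => k; apply/implyP => hk; apply: contraT => k_out; case: no_out.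
have k_lt : (k : nat) < (n.+1 + n.+1).+1 by rewrite addnn.
have hj : k - n.+2 < n.+1 by lia.
exists (Ordinal hj); rewrite ffunE /= inordK ?addn0; last by apply: window_index; lia.
suff -> : inord (n.+2 + (k - n.+2)) = k by [].
by apply: val_inj; rewrite /= inordK; [lia | apply: window_index; lia].
Qed.

(* The n+2 leftmost cells are free, the n+1 others range over {a, b}. *)
Lemma card_ab_tail : a != b -> #|ab_tail| = #|S| ^ n.+2 * 2 ^ n.+1.
Proof.
move=> ab.
pose allowed (k : 'I_(n.+1.*2.+1)) : pred S :=
  if n.+2 <= k then [pred s | pred2 a b s] else predT.
have -> : #|ab_tail| = #|(family allowed : simpl_pred (window S n.+1))|.
  apply: eq_card => w; rewrite inE.
  by apply/forallP/familyP => h k; have := h k; rewrite /allowed; case: ifP.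
rewrite card_family foldrE big_image /=.
pose c (k : nat) := if n.+2 <= k then 2 else #|S|.
rewrite (eq_bigr (fun k : 'I__ => c k)); last first.
  move=> k _; rewrite /allowed /c; case: ifP => _; last by apply: eq_card.
  by transitivity #|pred2 a b|; [apply: eq_card | rewrite card2 ab].
rewrite -(big_mkord xpredT c) (big_cat_nat _ (n := n.+2)) //=; last by rewrite -addnn; lia.
rewrite (@eq_big_nat _ _ _ 0 n.+2 _ (fun _ => #|S|)); last first.
  by move=> k /andP[_ hk]; rewrite /c leqNgt hk.
rewrite (@eq_big_nat _ _ _ n.+2 _ _ (fun _ => 2)); last by move=> k /andP[hk _]; rewrite /c hk.
by rewrite !prod_nat_const_nat; congr (_ * _ ^ _); rewrite -addnn; lia.
Qed.

End Counting.

Lemma exp2_mul_le (k m : nat) : 3 <= k -> 2 ^ m * m <= 2 * k ^ m.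
Proof.
move=> k3; elim: m => [//|m IH].
have le2k : 2 ^ m <= k ^ m by case: m IH => // m _; rewrite leq_exp2r //; lia.
by rewrite !expnS; nia.
Qed.

Lemma card_Dset_approx (S : finType) (a b : S) (n : nat) : a != b -> 3 <= #|S| ->
  #|Dset (approxCA a b n) (limitCA a b)| * n.+1 <= 2 * #|S| ^ (maxn n.+1 1).*2.+1.
Proof.
move=> ab S3.
have D_le : #|Dset (approxCA a b n) (limitCA a b)| <= #|S| ^ n.+2 * 2 ^ n.+1.
  by rewrite -(card_ab_tail n ab); apply/subset_leq_card/Dset_approx_limit.
move: #|_| D_le => D D_le.
have -> : (maxn n.+1 1).*2.+1 = n.+2 + n.+1 by rewrite -addnn; lia.
apply: (leq_trans (leq_mul D_le (leqnn _))).
by rewrite expnD -mulnA [2 * _]mulnCA leq_mul2l exp2_mul_le ?orbT.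
Qed.

Lemma delta_approx_le (S : finType) (a b : S) (n : nat) : a != b -> 3 <= #|S| ->
  (delta (approxCA a b n) (limitCA a b) <= 2%:R / n.+1%:R)%R.
Proof.
move=> ab S3; rewrite /delta.
have S_gt0 : (0 < (#|S| ^ (maxn n.+1 1).*2.+1)%:R :> rat)%R.
  by rewrite ltr0n expn_gt0; lia.
rewrite ler_pdivrMr // mulrAC ler_pdivlMr // -!natrM ler_nat.
exact: card_Dset_approx.
Qed.

Lemma eventually_div_lt (R : archiRealFieldType) (c eps : R) :
  (0 <= c)%R -> (0 < eps)%R -> exists N, forall n, N <= n -> (c / n.+1%:R < eps)%R.
Proof.
move=> c_ge0 eps_gt0; exists (Num.bound (c / eps)) => n hn.
have := archi_boundP (divr_ge0 c_ge0 (ltW eps_gt0)).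
rewrite ltr_pdivrMr // ltr_pdivrMr // => /lt_le_trans; apply.
by rewrite [X in (_ <= X)%R]mulrC ler_pM2r // ler_nat leqW.
Qed.

Theorem mainTheorem9 (S : finType) (HS : 3 <= #|S|) :
  exists (cs : nat -> CA S) (c : CA S),
    (forall n, injective (glob (cs n))) /\
    ~ injective (glob c) /\
    (forall eps : rat, (0 < eps)%R ->
       exists N, forall n, N <= n -> (delta (cs n) c < eps)%R).
Proof.
have /card_gt1P[a [b [_ _ ab]]] : 1 < #|S| by lia.
exists (approxCA a b), (limitCA a b); split; first exact: approxCA_injective.
split; first exact: limitCA_not_injective.
move=> eps eps_gt0.
have [N small] := eventually_div_lt (ler0n _ 2) eps_gt0.
exists N => n /small; apply: le_lt_trans; exact: delta_approx_le.
Qed.
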